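(* Let $m\ge1$ and $n_1,\dots,n_m\ge2$ be integers, $\mathcal D=\mathcal D_1\times\cdots\times\mathcal D_m$ the full factorial design where $\mathcal D_j$ is the set of $n_j$-th roots of unity, ordered lexicographically, and $L=\mathbb Z_{n_1}\times\cdots\times\mathbb Z_{n_m}$. Let $\mathcal F$ be a nonempty fraction (multiset of points of $\mathcal D$) with counting function $R=\sum_{\alpha\in L}c_\alpha X^\alpha$, where $X^\alpha(\zeta)=\zeta_1^{\alpha_1}\cdots\zeta_m^{\alpha_m}$, and let $\#\mathcal F=\sum_{\zeta\in\mathcal D}R(\zeta)$. Define the generalized wordlength pattern $(\alpha_1(\mathcal F),\dots,\alpha_m(\mathcal F))$ by \[ \alpha_i(\mathcal F)=\sum_{\alpha\in L,\ \|\alpha\|_0=i}\left(\frac{\|c_\alpha\|_2}{\|c_0\|_2}\right)^2,\quad i=1,\dots,m, \] where $\|\alpha\|_0$ is the number of nonzero components of $\alpha$ and $\|\cdot\|_2$ is the complex modulus. Let $Y=[R(\zeta):\zeta\in\mathcal D]$, and for $\alpha\in L$ let $H^\alpha_R$ be the real part (entrywise) of $\overline{X^\alpha}(X^\alpha)^T$, where $X^\alpha$ is the column vector $[X^\alpha(\zeta):\zeta\in\mathcal D]$. Then \[ \alpha_i(\mathcal F)=\frac{1}{(\#\mathcal F)^2}\,Y^T H_i Y,\qquad i=1,\dots,m, \] where $H_i=\sum_{\alpha\in L,\ \|\alpha\|_0=i}H_R^\alpha$.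
   Context: The counting function $R$ gives, for each $\zeta\in\mathcal D$, the number of times $\zeta$ appears in $\mathcal F$; the monomials $X^\alpha$, $\alpha\in L$, form a basis of complex functions on $\mathcal D$, so the $c_\alpha$ are unique. $c_0$ denotes the coefficient for $\alpha=(0,\dots,0)$. *)

From HB Require Import structures.
From mathcomp Require Import all_boot all_order all_algebra all_field.
Set Implicit Arguments. Unset Strict Implicit. Unset Printing Implicit Defensive.
Import Order.TTheory GRing.Theory Num.Theory.
Local Open Scope ring_scope.

(* Exponent index set L = Z_{n_1} x ... x Z_{n_m}; also used to index the
   design points: the point with index k is (omega_1^{k_1},...,omega_m^{k_m}). *)
Definition Lset (m : nat) (n : 'I_m -> nat) : finType :=
  {dffun forall j : 'I_m, 'I_(n j)}.

Definition point (m : nat) (n : 'I_m -> nat) (omega : 'I_m -> algC)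
  (k : Lset n) : 'I_m -> algC := fun j => omega j ^+ (k j).

Definition monom (m : nat) (n : 'I_m -> nat) (alpha : Lset n)
  (zeta : 'I_m -> algC) : algC := \prod_(j < m) zeta j ^+ (alpha j).

Definition norm0 (m : nat) (n : 'I_m -> nat) (alpha : Lset n) : nat :=
  #|[set j : 'I_m | (alpha j != 0%N :> nat)]|.

(* c_0 : the coefficient at alpha = (0,...,0) (the unique alpha with norm0 = 0) *)
Definition c0 (m : nat) (n : 'I_m -> nat) (c : Lset n -> algC) : algC :=
  \sum_(alpha : Lset n | norm0 alpha == 0%N) c alpha.

Definition cardF (m : nat) (n : 'I_m -> nat) (R : Lset n -> nat) : nat :=
  \sum_(k : Lset n) R k.

Definition gwlp (m : nat) (n : 'I_m -> nat) (c : Lset n -> algC) (i : nat) : algC :=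
  \sum_(alpha : Lset n | norm0 alpha == i) (`|c alpha| / `|c0 c|) ^+ 2.

Definition HR (m : nat) (n : 'I_m -> nat) (omega : 'I_m -> algC)
  (alpha : Lset n) (k k' : Lset n) : algC :=
  'Re ((monom alpha (point omega k))^* * monom alpha (point omega k')).

Definition Hi (m : nat) (n : 'I_m -> nat) (omega : 'I_m -> algC) (i : nat)
  (k k' : Lset n) : algC :=
  \sum_(alpha : Lset n | norm0 alpha == i) HR omega alpha k k'.

Definition quadform (m : nat) (n : 'I_m -> nat) (R : Lset n -> nat)
  (M : Lset n -> Lset n -> algC) : algC :=
  \sum_(k : Lset n) \sum_(k' : Lset n) (R k)%:R * M k k' * (R k')%:R.

From HB Require Import structures.
From mathcomp Require Import all_boot all_order all_algebra all_field.
From mathcomp Require Import ring.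
Import Order.TTheory GRing.Theory Num.Theory.
Local Open Scope ring_scope.

(* The monomials X^alpha are the characters of the group L acting on the
   design, so they are orthogonal: sum_zeta conj(X^alpha) X^beta = [alpha = beta] #D.
   Hence c_alpha * #D = sum_zeta R(zeta) conj(X^alpha(zeta)), and
   |c_alpha|^2 (#D)^2 = Y^T (conj X^alpha (X^alpha)^T) Y; this number is real,
   so it equals its real part Y^T H^alpha_R Y.  Since X^0 = 1 the same formula gives
   c_0 #D = #F, and dividing the two identities yields the theorem. *)

Lemma norm_prim_root {C : numClosedFieldType} {N : nat} {z : C} :
  N.-primitive_root z -> `|z| = 1.
Proof.
move=> prim_z; have /eqP := congr1 (fun x => `|x|) (prim_expr_order prim_z).
by rewrite normrX normr1 pexpr_eq1 ?(prim_order_gt0 prim_z) // => /eqP.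
Qed.

Lemma conjC_mul_norm1 {C : numClosedFieldType} (z : C) : `|z| = 1 -> z^* * z = 1.
Proof. by rewrite mulrC -normCK => ->; rewrite expr1n. Qed.

Section Quadform.
Variables (m : nat) (n : 'I_m -> nat) (R : Lset n -> nat).

Lemma quadform_sum (I : finType) (P : pred I) (M : I -> Lset n -> Lset n -> algC) :
  quadform R (fun k k' => \sum_(i | P i) M i k k') =
  \sum_(i | P i) quadform R (M i).
Proof.
rewrite /quadform.
under eq_bigr => k _ do under eq_bigr => k' _ do rewrite mulr_sumr mulr_suml.
under eq_bigr => k _ do rewrite exchange_big /=.
by rewrite exchange_big.
Qed.

Lemma quadform_conjCM (v : Lset n -> algC) :
  quadform R (fun k k' => (v k)^* * v k') =
  `|\sum_(k : Lset n) (R k)%:R * (v k)^*| ^+ 2.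
Proof.
rewrite normCK rmorph_sum mulr_suml; apply: eq_bigr => k _.
rewrite mulr_sumr; apply: eq_bigr => k' _.
by rewrite rmorphM /= rmorph_nat conjCK; ring.
Qed.

Lemma quadform_Re (M : Lset n -> Lset n -> algC) :
  quadform R (fun k k' => 'Re (M k k')) = 'Re (quadform R M).
Proof.
rewrite /quadform raddf_sum; apply: eq_bigr => k _.
rewrite raddf_sum; apply: eq_bigr => k' _.
by rewrite !mulr_natl !mulr_natr !raddfMn.
Qed.

End Quadform.

Section Characters.
Set Implicit Arguments.
Unset Strict Implicit.

Variables (m : nat) (n : 'I_m -> nat) (omega : 'I_m -> algC).
Hypothesis prim_omega : forall j, (n j).-primitive_root (omega j).

Local Notation X a k := (monom a (point omega k)).
Local Notation card_D := (#|Lset n|%:R : algC).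

Lemma norm_omegaX (j : 'I_m) (e : nat) : `|omega j ^+ e| = 1.
Proof. by rewrite normrX (norm_prim_root (prim_omega j)) expr1n. Qed.

Lemma norm_monom_point (a k : Lset n) : `|X a k| = 1.
Proof.
by rewrite /monom normr_prod; apply: big1 => j _; rewrite /point -exprM norm_omegaX.
Qed.

Definition shift (j0 : 'I_m) (k : Lset n) : Lset n :=
  [ffun j => (if j == j0 then @ordS (n j) else id) (k j)].

Lemma shift_inj (j0 : 'I_m) : injective (shift j0).
Proof.
move=> k1 k2 /ffunP eq_shift; apply/ffunP => j; have := eq_shift j.
by rewrite !ffunE; case: eqP => _ /=; [exact: ordS_inj | done].
Qed.

Lemma monom_point_shift (a k : Lset n) (j0 : 'I_m) :
  X a (shift j0 k) = omega j0 ^+ a j0 * X a k.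
Proof.
rewrite /monom (bigD1 j0) //= [in RHS](bigD1 j0) //= mulrA; congr (_ * _).
  by rewrite /point ffunE eqxx /= prim_expr_mod // exprS exprMn.
by apply: eq_bigr => j /negbTE j_neq; rewrite /point ffunE j_neq.
Qed.

Lemma monom_orthogonal (a b : Lset n) :
  \sum_(k : Lset n) (X a k)^* * X b k = (a == b)%:R * card_D.
Proof.
have [<-|a_neq_b] := eqVneq a b.
  rewrite mul1r (eq_bigr (fun _ => 1)) ?sumr_const // => k _.
  exact/conjC_mul_norm1/norm_monom_point.
rewrite mul0r.
have [j0 aj0_neq] : exists j0, a j0 != b j0.
  apply/existsP; apply: contraR a_neq_b => /existsPn eq_ab.
  by apply/eqP/ffunP => j; apply/eqP; rewrite -[_ == _]negbK eq_ab.
set S := \sum_(k : Lset n) _; set u := (omega j0 ^+ a j0)^* * omega j0 ^+ b j0.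
(* Reindexing by a shift in coordinate j0 multiplies S by u. *)
have S_eq : S = u * S.
  rewrite {1}/S (reindex_inj (@shift_inj j0)) /= mulr_sumr; apply: eq_bigr => k _.
  by rewrite !monom_point_shift rmorphM /u mulrACA.
have u_neq1 : u != 1.
  apply: contra aj0_neq => /eqP u1.
  have /eqP : omega j0 ^+ b j0 = omega j0 ^+ a j0.
    apply: (mulfI (x := (omega j0 ^+ a j0)^*)).
      by rewrite -normr_eq0 norm_conjC norm_omegaX oner_eq0.
    by rewrite -/u u1 conjC_mul_norm1 ?norm_omegaX.
  rewrite (eq_prim_root_expr (prim_omega j0)) !modn_small ?ltn_ord //.
  by rewrite eq_sym.
apply/eqP; have : (1 - u) * S == 0 by rewrite mulrBl mul1r -S_eq subrr.
by rewrite mulf_eq0 subr_eq0 eq_sym (negbTE u_neq1).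
Qed.

Definition zero_exponent : Lset n :=
  [ffun j => Ordinal (prim_order_gt0 (prim_omega j))].

Lemma card_D_neq0 : card_D != 0.
Proof. by rewrite pnatr_eq0 -lt0n; apply/card_gt0P; exists zero_exponent. Qed.

Lemma norm0_eq0 (a : Lset n) : (norm0 a == 0%N) = (a == zero_exponent).
Proof.
rewrite /norm0 cards_eq0; apply/eqP/eqP => [/setP a_zero|->].
  apply/ffunP => j; rewrite ffunE; apply/val_inj => /=.
  by move: (a_zero j); rewrite inE in_set0 => /negbFE/eqP.
by apply/setP => j; rewrite !inE ffunE.
Qed.

Lemma monom_zero_exponent (k : Lset n) : X zero_exponent k = 1.
Proof. by rewrite /monom big1 // => j _; rewrite ffunE expr0. Qed.

Section Fraction.
Variables (R : Lset n -> nat) (c : Lset n -> algC).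
Hypothesis R_expansion : forall k : Lset n,
  (R k)%:R = \sum_(alpha : Lset n) c alpha * monom alpha (point omega k).

Lemma coef_fourier (a : Lset n) :
  c a * card_D = \sum_(k : Lset n) (R k)%:R * (X a k)^*.
Proof.
under [RHS]eq_bigr => k _ do rewrite R_expansion mulr_suml.
rewrite exchange_big /=.
transitivity (\sum_(b : Lset n) c b * ((a == b)%:R * card_D)).
  rewrite (bigD1 a) //= eqxx mul1r big1 ?addr0 // => b.
  by rewrite eq_sym => /negbTE ->; rewrite mul0r mulr0.
apply: eq_bigr => b _; rewrite -monom_orthogonal mulr_sumr.
by apply: eq_bigr => k _; ring.
Qed.

Lemma normCK_coef (a : Lset n) :
  `|c a| ^+ 2 * card_D ^+ 2 = quadform R (HR omega a).
Proof.
rewrite /HR quadform_Re quadform_conjCM -coef_fourier.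
by rewrite (Creal_ReP _ _) ?rpredX ?normr_real // normrM exprMn normr_nat.
Qed.

Lemma c0_fourier : c0 c * card_D = (cardF R)%:R.
Proof.
rewrite /c0 (big_pred1 zero_exponent) => [|a]; last by rewrite /= norm0_eq0.
rewrite coef_fourier /cardF natr_sum; apply: eq_bigr => k _.
by rewrite monom_zero_exponent rmorph1 mulr1.
Qed.

End Fraction.
End Characters.

Theorem proposition6 (m : nat) (n : 'I_m -> nat) (omega : 'I_m -> algC)
  (R : Lset n -> nat) (c : Lset n -> algC) :
  (0 < m)%N ->
  (forall j, (2 <= n j)%N) ->
  (forall j, (n j).-primitive_root (omega j)) ->
  (0 < cardF R)%N ->
  (forall k : Lset n,
     (R k)%:R = \sum_(alpha : Lset n) c alpha * monom alpha (point omega k)) ->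
  forall i : nat, (1 <= i <= m)%N ->
    gwlp c i = ((cardF R)%:R ^+ 2)^-1 * quadform R (Hi omega i).
Proof.
move=> _ _ prim_omega cardF_gt0 R_expansion i _.
have card_D_neq0 := card_D_neq0 prim_omega.
have cardF_neq0 : (cardF R)%:R != 0 :> algC by rewrite pnatr_eq0 -lt0n.
have c0E := c0_fourier prim_omega R_expansion.
have norm_c0 : `|c0 c| = (cardF R)%:R / #|Lset n|%:R.
  by rewrite -c0E mulfK // ger0_norm // -(mulfK card_D_neq0 (c0 c)) c0E divr_ge0.
rewrite /Hi quadform_sum /gwlp mulr_sumr; apply: eq_bigr => a _.
rewrite -(normCK_coef prim_omega R_expansion) expr_div_n norm_c0.
by field; rewrite card_D_neq0 cardF_neq0.
Qed.
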